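(* Let $\mathbf{X}=\mathbf{D}_1\boldsymbol{\Gamma}_1$ with $\boldsymbol{\Gamma}_1\neq 0$, and $\mathbf{Y}=\mathbf{X}+\mathbf{E}$ with $\|\mathbf{E}\|_{2,\infty}^{p}\le\epsilon_0$. Let $|\Gamma_1^{\min}|$ and $|\Gamma_1^{\max}|$ be the smallest and largest absolute values of the nonzero entries of $\boldsymbol{\Gamma}_1$. Let $\hat{\boldsymbol{\Gamma}}_1=\mathcal{H}_{\beta_1}(\mathbf{D}_1^T\mathbf{Y})$. Assume (a) $\|\boldsymbol{\Gamma}_1\|_{0,\infty}^{s}<\tfrac12\Big(1+\tfrac{1}{\mu(\mathbf{D}_1)}\tfrac{|\Gamma_1^{\min}|}{|\Gamma_1^{\max}|}\Big)-\tfrac{1}{\mu(\mathbf{D}_1)}\tfrac{\epsilon_0}{|\Gamma_1^{\max}|}$; and (b) $|\Gamma_1^{\min}|-(\|\boldsymbol{\Gamma}_1\|_{0,\infty}^{s}-1)\mu(\mathbf{D}_1)|\Gamma_1^{\max}|-\epsilon_0>\beta_1>\|\boldsymbol{\Gamma}_1\|_{0,\infty}^{s}\mu(\mathbf{D}_1)|\Gamma_1^{\max}|+\epsilon_0$. Then (1) the support of $\hat{\boldsymbol{\Gamma}}_1$ equals the support of $\boldsymbol{\Gamma}_1$; and (2) $\|\boldsymbol{\Gamma}_1-\hat{\boldsymbol{\Gamma}}_1\|_{2,\infty}^{p}\le\sqrt{\|\boldsymbol{\Gamma}_1\|_{0,\infty}^{p}}\,\big(\epsilon_0+\mu(\mathb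f{D}_1)(\|\boldsymbol{\Gamma}_1\|_{0,\infty}^{s}-1)|\Gamma_1^{\max}|\big)$.
   Context: Setting. Signals are one-dimensional of length $N$ with periodic boundary conditions; $m_0=1$, $\boldsymbol{\Gamma}_0=\mathbf{X}$. For $i\ge1$, $\boldsymbol{\Gamma}_i\in\mathbb{R}^{Nm_i}$ has entry $km_i+r$ equal to the coefficient of filter $r$ at spatial shift $k$. $\mathbf{D}_i\in\mathbb{R}^{Nm_{i-1}\times Nm_i}$ is a (stride) convolutional dictionary whose column $km_i+r$ is local filter $r$ (length $n_{i-1}m_{i-1}$) placed cyclically on entries $km_{i-1},\dots,km_{i-1}+n_{i-1}m_{i-1}-1$, zero elsewhere; in particular $\mathbf{D}_1\in\mathbb{R}^{N\times Nm_1}$ consists of all cyclic shifts of $m_1$ filters of length $n_0$. Columns have unit $\ell_2$ norm; $\mu(\mathbf{D})=\max_{i\neq j}|\mathbf{d}_i^T\mathbf{d}_j|$. Stripes: $\mathbf{S}_{i,j}\boldsymbol{\Gamma}_i$ is the subvector of $\boldsymbol{\Gamma}_i$ at spatial shifts $k\in\{j-n_{i-1}+1,\dots,j+n_{i-1}-1\}$ (mod $N$), all channels (length $(2n_{i-1}-1)m_i$); $\|\boldsymbol{\Gamma}_i\|_{0,\infty}^{s}=\max_j\|\mathbf{S}_{i,j}\boldsymbol{\Gamma}_i\|_0$. Patches: for $i\ge0$, $\mathbf{P}_{i,j}\mathbf{V}$ extracts from $\mathbf{V}\in\mathbb{R}^{Nm_i}$ the cyclically contiguous subvector of length $n_im_i$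 at spatial shifts $j,\dots,j+n_i-1$ (all channels). $\|\mathbf{V}\|_{2,\infty}^{p}=\max_j\|\mathbf{P}_{i,j}\mathbf{V}\|_2$ and $\|\mathbf{V}\|_{0,\infty}^{p}=\max_j\|\mathbf{P}_{i,j}\mathbf{V}\|_0$ (for $\mathbf{E}\in\mathbb{R}^N$ patches have length $n_0$; for $\boldsymbol{\Gamma}_1$ they have length $n_1m_1$). Hard thresholding: $\mathcal{H}_\beta$ acts entrywise, $\mathcal{H}_\beta(z)=z$ if $|z|>\beta$ and $0$ otherwise. *)

From HB Require Import structures.
From mathcomp Require Import all_boot all_order all_algebra.
Set Implicit Arguments. Unset Strict Implicit. Unset Printing Implicit Defensive.
Import Order.TTheory GRing.Theory Num.Theory.
Local Open Scope ring_scope.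

Section Defs.
Variable R : rcfType.

Definition cyc_off (N k i : nat) : nat := ((i + N - k) %% N)%N.

(* D (N x N*m1) is a convolutional dictionary: column k*m1+r is filter r
   (length n0, taps h r t, t < n0) placed cyclically on entries k,...,k+n0-1. *)
Definition conv_dict (N m1 n0 : nat) (D : 'M[R]_(N, N * m1)) : Prop :=
  exists h : nat -> nat -> R, forall (i : 'I_N) (c : 'I_(N * m1)),
    D i c = if (cyc_off N (c %/ m1) i < n0)%N
            then h (c %% m1)%N (cyc_off N (c %/ m1) i) else 0.

Definition unit_cols n m (D : 'M[R]_(n, m)) : Prop :=
  forall c : 'I_m, \sum_(i < n) D i c ^+ 2 = 1.

Definition mutual_coh n m (D : 'M[R]_(n, m)) : R :=
  \big[Num.max/0]_(c < m) \big[Num.max/0]_(c' < m | c' != c)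
     `|\sum_(i < n) D i c * D i c'|.

(* shift k lies in the stripe centred at j : k in {j-n0+1,...,j+n0-1} mod N *)
Definition in_stripe (N n0 j k : nat) : bool :=
  (cyc_off N j k < n0)%N || (cyc_off N k j < n0)%N.

(* ||G||_{0,inf}^s  (stripes of layer 1, entry c has shift c %/ m1) *)
Definition stripe_l0inf (N m1 n0 : nat) (G : 'cV[R]_(N * m1)) : nat :=
  \big[maxn/0%N]_(j < N)
     #|[set c : 'I_(N * m1) | (G c 0 != 0) && in_stripe N n0 j (c %/ m1)]|.

(* patch j of a vector in R^{N m}: shifts j,...,j+n-1 (mod N), all channels *)
Definition patch_l0inf (N m n : nat) (V : 'cV[R]_(N * m)) : nat :=
  \big[maxn/0%N]_(j < N)
     #|[set c : 'I_(N * m) | (V c 0 != 0) && (cyc_off N j (c %/ m) < n)%N]|.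

Definition patch_l2inf (N m n : nat) (V : 'cV[R]_(N * m)) : R :=
  \big[Num.max/0]_(j < N)
     Num.sqrt (\sum_(c < N * m | (cyc_off N j (c %/ m) < n)%N) V c 0 ^+ 2).

Definition signal_patch_l2inf (N n0 : nat) (E : 'cV[R]_N) : R :=
  \big[Num.max/0]_(j < N)
     Num.sqrt (\sum_(i < N | (cyc_off N j i < n0)%N) E i 0 ^+ 2).

Definition hard_thr (b z : R) : R := if b < `|z| then z else 0.

Definition supp n (G : 'cV[R]_n) : {set 'I_n} := [set c | G c 0 != 0].

Definition abs_max n (G : 'cV[R]_n) : R :=
  \big[Num.max/0]_(c < n | G c 0 != 0) `|G c 0|.
Definition abs_min n (G : 'cV[R]_n) : R :=
  \big[Num.min/abs_max G]_(c < n | G c 0 != 0) `|G c 0|.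

End Defs.

(* Write [(D^T Y)_c = Γ_c + Σ_{c'≠c} <d_c, d_c'> Γ_c' + <d_c, E>].  Column d_c
   is supported on one patch of length n0 and has unit norm, so Cauchy-Schwarz
   bounds the noise term by ε0; two columns are orthogonal unless their shifts
   lie in a common stripe, so the interference term involves at most s - 1
   (resp. s, off the support) nonzero entries, each contributing at most
   μ |Γ^max|.  Condition (b) then places β1 strictly between the correlations
   off the support and those on it, so thresholding keeps exactly the support,
   and on it the error is bounded entrywise, whence the patch bound. *)
From HB Require Import structures.
From mathcomp Require Import all_boot all_order all_algebra.
From mathcomp Require Import zify ring lra.
Set Implicit Arguments. Unset Strict Implicit. Unset Printing Implicit Defensive.
Import Order.TTheory GRing.Theory Num.Theory.
Local Open Scope ring_scope.

Lemma cyc_offE (N k i : nat) : (k < N)%N -> (i < N)%N ->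
  cyc_off N k i = if (k <= i)%N then (i - k)%N else (i + N - k)%N.
Proof.
move=> ltkN ltiN; rewrite /cyc_off; case: leqP => le_ki.
  have -> : (i + N - k = (i - k) + N)%N by lia.
  by rewrite modnDr modn_small //; lia.
by rewrite modn_small //; lia.
Qed.

Lemma in_stripe_refl (N n0 j : nat) : (0 < n0)%N -> in_stripe N n0 j j.
Proof. by move=> n0_gt0; rewrite /in_stripe /cyc_off addKn modnn n0_gt0. Qed.

Lemma in_stripe_overlap (N n0 k k' i : nat) :
  (k < N)%N -> (k' < N)%N -> (i < N)%N ->
  (cyc_off N k i < n0)%N -> (cyc_off N k' i < n0)%N -> in_stripe N n0 k k'.
Proof.
move=> ltkN ltk'N ltiN; rewrite /in_stripe !cyc_offE //.
case: (leqP k i); case: (leqP k' i); case: (leqP k k'); case: (leqP k' k); lia.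
Qed.

Lemma shift_ltn (N m : nat) (c : 'I_(N * m)) : (c %/ m < N)%N.
Proof.
case: m c => [|m] c; first by case: c; rewrite muln0.
by rewrite ltn_divLR.
Qed.

Definition shift_ord (N m : nat) (c : 'I_(N * m)) : 'I_N := Ordinal (shift_ltn c).

Definition stripe_supp (R : rcfType) (N m1 n0 : nat) (G : 'cV[R]_(N * m1)) (j : nat)
  : {set 'I_(N * m1)} :=
  [set c | (G c 0 != 0) && in_stripe N n0 j (c %/ m1)].

Lemma card_stripe_supp_le (R : rcfType) (N m1 n0 : nat) (G : 'cV[R]_(N * m1))
    (c : 'I_(N * m1)) :
  (#|stripe_supp n0 G (c %/ m1)| <= stripe_l0inf n0 G)%N.
Proof.
exact: (@leq_bigmax _ (fun j : 'I_N => #|stripe_supp n0 G j|) (shift_ord c)).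
Qed.

Lemma mutual_coh_ge0 (R : rcfType) n m (D : 'M[R]_(n, m)) : 0 <= mutual_coh D.
Proof. exact: bigmax_ge_id. Qed.

Lemma ler_mutual_coh (R : rcfType) n m (D : 'M[R]_(n, m)) (c c' : 'I_m) :
  c' != c -> `|\sum_i D i c * D i c'| <= mutual_coh D.
Proof.
move=> neq_c'c; apply: le_trans (le_bigmax 0 (fun c => \big[Num.max/0]_(c' < m | c' != c)
     `|\sum_(i < n) D i c * D i c'|) c).
exact: (le_bigmax_cond 0 (fun c' => `|\sum_(i < n) D i c * D i c'|) neq_c'c).
Qed.

Lemma abs_max_ge0 (R : rcfType) n (G : 'cV[R]_n) : 0 <= abs_max G.
Proof. exact: bigmax_ge_id. Qed.

Lemma ler_abs_max (R : rcfType) n (G : 'cV[R]_n) c :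
  G c 0 != 0 -> `|G c 0| <= abs_max G.
Proof. exact: (le_bigmax_cond 0 (fun c => `|G c 0|)). Qed.

Lemma abs_min_le (R : rcfType) n (G : 'cV[R]_n) c :
  G c 0 != 0 -> abs_min G <= `|G c 0|.
Proof. exact: (bigmin_le_cond _ (fun c => `|G c 0|)). Qed.

Lemma unit_dot_sqr_le (R : realFieldType) (I : finType) (P : pred I) (a b : I -> R) :
  \sum_(i | P i) a i ^+ 2 = 1 ->
  (\sum_(i | P i) a i * b i) ^+ 2 <= \sum_(i | P i) b i ^+ 2.
Proof.
move=> a_unit.
have expand x : \sum_(i | P i) (b i - x * a i) ^+ 2 = \sum_(i | P i) b i ^+ 2
    - 2 * x * \sum_(i | P i) a i * b i + x ^+ 2 * \sum_(i | P i) a i ^+ 2.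
  rewrite !mulr_sumr -sumrB -big_split /=; apply: eq_bigr => i _; ring.
set l := \sum_(i | P i) a i * b i.
have : 0 <= \sum_(i | P i) (b i - l * a i) ^+ 2 by apply: sumr_ge0 => i _; apply: sqr_ge0.
by rewrite expand -/l a_unit mulr1 expr2; lra.
Qed.

Lemma hard_thr_small (R : rcfType) (b z : R) : `|z| <= b -> hard_thr b z = 0.
Proof. by rewrite /hard_thr ltNge => ->. Qed.

Lemma hard_thr_large (R : rcfType) (b z : R) : b < `|z| -> hard_thr b z = z.
Proof. by rewrite /hard_thr => ->. Qed.

Lemma patch_l2inf_le_supp (R : rcfType) (N m n : nat) (G V : 'cV[R]_(N * m)) (B : R) :
  0 <= B -> (forall c, G c 0 = 0 -> V c 0 = 0) ->
  (forall c, G c 0 != 0 -> `|V c 0| <= B) ->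
  patch_l2inf n V <= Num.sqrt (patch_l0inf n G)%:R * B.
Proof.
move=> B_ge0 V0 V_le; apply: bigmax_le => [|j _]; first by rewrite mulr_ge0 ?sqrtr_ge0.
pose inpatch (c : 'I_(N * m)) := (cyc_off N j (c %/ m) < n)%N.
pose Q := [set c | (G c 0 != 0) && inpatch c].
have card_Q : (#|Q| <= patch_l0inf n G)%N.
  exact: (@leq_bigmax _ (fun j : 'I_N => #|[set c : 'I_(N * m) |
     (G c 0 != 0) && (cyc_off N j (c %/ m) < n)%N]|) j).
have sum_le : \sum_(c | inpatch c) V c 0 ^+ 2 <= #|Q|%:R * B ^+ 2.
  apply: le_trans (_ : \sum_(c | inpatch c) (if G c 0 != 0 then B ^+ 2 else 0) <= _).
    apply: ler_sum => c _; case: (eqVneq (G c 0) 0) => [/V0 -> | /V_le Vc_le].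
      by rewrite expr0n.
    by rewrite -real_normK ?num_real // lerXn2r ?nnegrE.
  rewrite -big_mkcondr (eq_bigl (fun c => c \in Q)) => [|c]; last by rewrite inE andbC.
  by rewrite sumr_const mulr_natl.
apply: le_trans (ler_wsqrtr sum_le) _.
rewrite sqrtrM ?ler0n // sqrtr_sqr ger0_norm //.
by apply: ler_wpM2r => //; apply: ler_wsqrtr; rewrite ler_nat.
Qed.

Section HardThresholding.
Variables (R : rcfType) (n : nat) (G z : 'cV[R]_n) (b : R).
Hypotheses (z_offsupp : forall c, G c 0 = 0 -> `|z c 0| <= b)
           (z_supp : forall c, G c 0 != 0 -> b < `|z c 0|).

Let Ghat := \col_c hard_thr b (z c 0).

Lemma hard_thr_colE (c : 'I_n) : Ghat c 0 = if G c 0 != 0 then z c 0 else 0.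
Proof.
rewrite mxE; case: (eqVneq (G c 0) 0) => [/z_offsupp | /z_supp] /=.
  exact: hard_thr_small.
exact: hard_thr_large.
Qed.

Lemma hard_thr_col_err (c : 'I_n) :
  (G - Ghat) c 0 = if G c 0 != 0 then G c 0 - z c 0 else 0.
Proof.
have -> : (G - Ghat) c 0 = G c 0 - Ghat c 0 by rewrite !mxE.
by rewrite hard_thr_colE; case: eqVneq => [->|]; rewrite ?subrr.
Qed.

Lemma supp_hard_thr_col : 0 <= b -> supp Ghat = supp G.
Proof.
move=> b_ge0; apply/setP => c; rewrite !inE hard_thr_colE.
case: (eqVneq (G c 0) 0) => [_ | /z_supp lt_b] /=; first by rewrite eqxx.
by rewrite -normr_gt0 (le_lt_trans b_ge0 lt_b).
Qed.

End HardThresholding.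

Section ConvolutionalDictionary.
Variables (R : rcfType) (N m1 n0 : nat) (D : 'M[R]_(N, N * m1)).
Hypothesis convD : conv_dict n0 D.

Lemma conv_dict_col0 (c : 'I_(N * m1)) (i : 'I_N) :
  ~~ (cyc_off N (c %/ m1) i < n0)%N -> D i c = 0.
Proof. by case: convD => h ->; move/negbTE ->. Qed.

Lemma conv_dict_dot0 (c c' : 'I_(N * m1)) :
  ~~ in_stripe N n0 (c %/ m1) (c' %/ m1) -> \sum_i D i c * D i c' = 0.
Proof.
move=> not_stripe; apply: big1 => i _.
have [in_c|/conv_dict_col0->] := boolP (cyc_off N (c %/ m1) i < n0)%N; last by rewrite mul0r.
have [in_c'|/conv_dict_col0->] := boolP (cyc_off N (c' %/ m1) i < n0)%N; last by rewrite mulr0.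
have := in_stripe_overlap (shift_ltn c) (shift_ltn c') (ltn_ord i) in_c in_c'.
by rewrite (negbTE not_stripe).
Qed.

Lemma conv_dict_noise_le (E : 'cV[R]_N) (c : 'I_(N * m1)) :
  unit_cols D -> `|\sum_i D i c * E i 0| <= signal_patch_l2inf n0 E.
Proof.
move=> unitD; pose P (i : 'I_N) := (cyc_off N (c %/ m1) i < n0)%N.
have restrict (F : 'I_N -> R) : (forall i, ~~ P i -> F i = 0) -> \sum_i F i = \sum_(i | P i) F i.
  by move=> F0; rewrite (bigID P) /= [X in _ + X]big1 ?addr0.
have col_unit : \sum_(i | P i) D i c ^+ 2 = 1.
  by rewrite -(unitD c) [RHS]restrict // => i /conv_dict_col0 ->; rewrite expr0n.
have dot_patch : \sum_i D i c * E i 0 = \sum_(i | P i) D i c * E i 0.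
  by rewrite restrict // => i /conv_dict_col0 ->; rewrite mul0r.
rewrite -sqrtr_sqr dot_patch; apply: le_trans (ler_wsqrtr (unit_dot_sqr_le _ col_unit)) _.
exact: (le_bigmax 0 (fun j : 'I_N =>
   Num.sqrt (\sum_(i < N | (cyc_off N j i < n0)%N) E i 0 ^+ 2)) (shift_ord c)).
Qed.

Lemma conv_dict_interference_le (G : 'cV[R]_(N * m1)) (c : 'I_(N * m1)) :
  `|\sum_(c' | c' != c) (\sum_i D i c * D i c') * G c' 0| <=
   #|stripe_supp n0 G (c %/ m1) :\ c|%:R * (mutual_coh D * abs_max G).
Proof.
set A := _ :\ c; set K := mutual_coh D * abs_max G.
have K_ge0 : 0 <= K by rewrite mulr_ge0 ?mutual_coh_ge0 ?abs_max_ge0.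
have term_le c' : c' != c ->
    `|(\sum_i D i c * D i c') * G c' 0| <= if c' \in A then K else 0.
  move=> neq_c'c; rewrite normrM in_setD1 inE neq_c'c /=.
  case: (eqVneq (G c' 0) 0) => [-> | Gc'0] /=; first by rewrite normr0 mulr0.
  case: ifP => [_ | /negbT /conv_dict_dot0 ->]; last by rewrite normr0 mul0r.
  by rewrite ler_pM ?normr_ge0 ?ler_mutual_coh ?ler_abs_max.
apply: le_trans (ler_norm_sum _ _ _) _; apply: le_trans (ler_sum _ term_le) _.
apply: le_trans (_ : \sum_c' (if c' \in A then K else 0) <= _).
  by rewrite [X in _ <= X](bigD1 c) //= ler_wpDl //; case: ifP.
by rewrite -big_mkcond sumr_const mulr_natl.
Qed.

End ConvolutionalDictionary.

Lemma dict_correlationE (R : rcfType) n m (D : 'M[R]_(n, m)) (G : 'cV[R]_m)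
    (E : 'cV[R]_n) (c : 'I_m) :
  unit_cols D ->
  (D^T *m (D *m G + E)) c 0 = G c 0 +
     \sum_(c' | c' != c) (\sum_i D i c * D i c') * G c' 0 + \sum_i D i c * E i 0.
Proof.
move=> unitD; rewrite mxE.
transitivity (\sum_i (\sum_c' D i c * D i c' * G c' 0 + D i c * E i 0)).
  apply: eq_bigr => i _; rewrite !mxE mulrDr mulr_sumr; congr (_ + _).
  by apply: eq_bigr => c' _; rewrite mulrA.
rewrite big_split /= exchange_big /= (bigD1 c) //=; congr (_ + _ + _).
  by rewrite -mulr_suml -[X in _ = X]mul1r -(unitD c); congr (_ * _); apply: eq_bigr => i _.
by apply: eq_bigr => c' _; rewrite mulr_suml.
Qed.

Section Correlation.
Variables (R : rcfType) (N m1 n0 : nat) (D : 'M[R]_(N, N * m1)).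
Variables (G : 'cV[R]_(N * m1)) (E : 'cV[R]_N).
Hypotheses (n0_gt0 : (0 < n0)%N) (convD : conv_dict n0 D) (unitD : unit_cols D).

Let corr c := (D^T *m (D *m G + E)) c 0.
Let K := mutual_coh D * abs_max G.
Let s : R := (stripe_l0inf n0 G)%:R.
Let eps := signal_patch_l2inf n0 E.

Lemma correlation_err_le (c : 'I_(N * m1)) :
  `|corr c - G c 0| <= #|stripe_supp n0 G (c %/ m1) :\ c|%:R * K + eps.
Proof.
have cancel (a b e : R) : a + b + e - a = b + e by ring.
rewrite /corr dict_correlationE // cancel.
by apply: le_trans (ler_normD _ _) _; rewrite lerD ?conv_dict_interference_le ?conv_dict_noise_le.
Qed.

Lemma correlation_err_supp (c : 'I_(N * m1)) :
  G c 0 != 0 -> `|corr c - G c 0| <= (s - 1) * K + eps.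
Proof.
move=> Gc0; apply: le_trans (correlation_err_le c) _; rewrite lerD2r ler_wpM2r //.
  by rewrite mulr_ge0 ?mutual_coh_ge0 ?abs_max_ge0.
have c_in : c \in stripe_supp n0 G (c %/ m1) by rewrite inE Gc0 in_stripe_refl.
have := card_stripe_supp_le n0 G c; rewrite (cardsD1 c) c_in => card_le.
by rewrite lerBrDr natr1 ler_nat.
Qed.

Lemma correlation_offsupp (c : 'I_(N * m1)) :
  G c 0 = 0 -> `|corr c| <= s * K + eps.
Proof.
move=> Gc0; have := correlation_err_le c; rewrite Gc0 subr0 => /le_trans; apply.
rewrite lerD2r ler_wpM2r ?mulr_ge0 ?mutual_coh_ge0 ?abs_max_ge0 // ler_nat.
exact: leq_trans (subset_leq_card (subsetDl _ _)) (card_stripe_supp_le n0 G c).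
Qed.

End Correlation.

Theorem lemma1 (R : rcfType) (N m1 n0 n1 : nat) (D1 : 'M[R]_(N, N * m1))
  (G1 : 'cV[R]_(N * m1)) (E : 'cV[R]_N) (eps0 beta1 : R) :
  (0 < n0)%N -> (n0 <= N)%N ->
  conv_dict n0 D1 -> unit_cols D1 ->
  G1 != 0 ->
  signal_patch_l2inf n0 E <= eps0 ->
  let X := D1 *m G1 in
  let Y := X + E in
  let mu := mutual_coh D1 in
  let gmin := abs_min G1 in
  let gmax := abs_max G1 in
  let s : R := (stripe_l0inf n0 G1)%:R in
  let G1hat := \col_c hard_thr beta1 ((D1^T *m Y) c 0) in
  s < 2^-1 * (1 + mu^-1 * (gmin / gmax)) - mu^-1 * (eps0 / gmax) ->
  s * mu * gmax + eps0 < beta1 < gmin - (s - 1) * mu * gmax - eps0 ->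
  supp G1hat = supp G1 /\
  patch_l2inf n1 (G1 - G1hat)
    <= Num.sqrt (patch_l0inf n1 G1)%:R * (eps0 + mu * (s - 1) * gmax).
Proof.
move=> n0_gt0 _ convD unitD /matrix0Pn[c0 [j0 G1c0]] hE X Y mu gmin gmax s G1hat _.
move=> /andP[beta1_gt beta1_lt]; rewrite (ord1 j0) in G1c0.
have beta1_ge0 : 0 <= beta1.
  have : 0 <= signal_patch_l2inf n0 E by exact: bigmax_ge_id.
  have : 0 <= s * mu * gmax by rewrite !mulr_ge0 ?ler0n ?mutual_coh_ge0 ?abs_max_ge0.
  lra.
set z := D1^T *m Y.
have err_supp c : G1 c 0 != 0 -> `|z c 0 - G1 c 0| <= eps0 + mu * (s - 1) * gmax.
  move=> /(correlation_err_supp E n0_gt0 convD unitD); rewrite -/mu -/gmax -/s; lra.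
have small_offsupp c : G1 c 0 = 0 -> `|z c 0| <= beta1.
  move=> /(correlation_offsupp E convD unitD); rewrite -/mu -/gmax -/s; lra.
have large_supp c : G1 c 0 != 0 -> beta1 < `|z c 0|.
  move=> G1c; have := lerB_dist (G1 c 0) (z c 0); rewrite distrC.
  have := abs_min_le G1c; have := err_supp c G1c; rewrite -/gmin; lra.
split; first exact: supp_hard_thr_col.
apply: patch_l2inf_le_supp => [|c G1c|c G1c]; rewrite ?hard_thr_col_err //.
- exact: le_trans (normr_ge0 _) (err_supp c0 G1c0).
- by rewrite G1c eqxx.
- by rewrite G1c distrC err_supp.
Qed.
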